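(* Let $P$ be a generic regular hexagon in $\mathbb{R}^3$. For every support system $u_1,\ldots,u_6$ of $P$, the derived hexagon $P'$, with edge vectors $v'_1=u_2-u_1,\ v'_2=u_3-u_2,\ldots,\ v'_5=u_6-u_5,\ v'_6=u_1-u_6$ and determinants $\Delta'_i=(v'_i,[v'_{i+1},v'_{i+2}])$, satisfies $\Delta'_1=\Delta'_4$, $\Delta'_2=\Delta'_5$, $\Delta'_3=\Delta'_6$; hence every generic derivative of $P$ is strongly-regular. Moreover, all (generic) derivatives of $P$, over all support systems of $P$, have the same type.
   Context: Indices are cyclic mod $6$; $(\cdot,\cdot)$ and $[\cdot,\cdot]$ are the dot and cross products. For a closed hexagon $A_1\ldots A_6$ put $v_1=\overline{A_1A_2},\ldots,v_6=\overline{A_6A_1}$ and $\Delta_i=(v_i,[v_{i+1},v_{i+2}])$. The hexagon is generic if any two consecutive $v_i,v_{i+1}$ are not collinear and any three consecutive $v_i,v_{i+1},v_{i+2}$ are not coplanar. A support system is a tuple $u_1,\ldots,u_6$ with $[u_i,u_{i+1}]=v_{i+1}$ for all $i$; a generic hexagon is regular if it has a support system. The derived hexagon (derivative) for a support system is $B_1\ldots B_6$ with $\overline{OB_i}=u_i$ for a fixed origin $O$. A regular hexagon is strongly-regular if $\Delta_1=\Delta_4$, $\Delta_2=\Delta_5$, $\Delta_3=\Delta_6$; its type is the cyclic ratio $\Delta_1:\Delta_2:\Delta_3$, i.e. the triple $(\Delta_1,\Delta_2,\Delta_3)$ up to multiplication by a nonzero scalar and cyclic permutation. *)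

From HB Require Import structures.
From mathcomp Require Import all_boot all_order all_algebra.
From mathcomp Require Import reals.
Set Implicit Arguments. Unset Strict Implicit. Unset Printing Implicit Defensive.
Import Order.TTheory GRing.Theory Num.Theory.
Local Open Scope ring_scope.

Section Hex.
Variable R : realType.
Notation vec := 'rV[R]_3.

Definition i3 (k : nat) : 'I_3 := inord (k %% 3).
Definition sh (i : 'I_6) (k : nat) : 'I_6 := inord ((i + k) %% 6).

Definition dot (u w : vec) : R := \sum_(k < 3) u 0 k * w 0 k.
Definition cross (u w : vec) : vec :=
  \row_(k < 3) (u 0 (i3 (k + 1)) * w 0 (i3 (k + 2))
              - u 0 (i3 (k + 2)) * w 0 (i3 (k + 1))).

Definition collinear (u w : vec) : bool := (\rank (col_mx u w) < 2)%N.
Definition coplanar (u v w : vec) : bool := (\rank (col_mx u (col_mx v w)) < 3)%N.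

(* a closed hexagon A_0 ... A_5 (paper's A_1 ... A_6), given by its vertices *)
Definition hexagon := 'I_6 -> vec.

Definition edge (A : hexagon) (i : 'I_6) : vec := A (sh i 1) - A i.

Definition Delta (A : hexagon) (i : 'I_6) : R :=
  dot (edge A i) (cross (edge A (sh i 1)) (edge A (sh i 2))).

Definition generic (A : hexagon) : Prop :=
  forall i : 'I_6, ~~ collinear (edge A i) (edge A (sh i 1)) /\
    ~~ coplanar (edge A i) (edge A (sh i 1)) (edge A (sh i 2)).

Definition support_system (A : hexagon) (u : 'I_6 -> vec) : Prop :=
  forall i : 'I_6, cross (u i) (u (sh i 1)) = edge A (sh i 1).

Definition regular (A : hexagon) : Prop :=
  generic A /\ exists u, support_system A u.

(* derived hexagon B_i with O B_i = u_i (origin O = 0) *)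
Definition derived (u : 'I_6 -> vec) : hexagon := u.

Definition strongly_regular (A : hexagon) : Prop :=
  regular A /\ forall i : 'I_6, Delta A i = Delta A (sh i 3).

Definition Dtriple (A : hexagon) : R * R * R :=
  (Delta A (sh ord0 0), Delta A (sh ord0 1), Delta A (sh ord0 2)).

Definition rot3 (t : R * R * R) : R * R * R :=
  let: (a, b, c) := t in (b, c, a).

Definition same_ratio (t t' : R * R * R) : Prop :=
  exists (k : R) (n : nat), k != 0 /\ (n < 3)%N /\
    let: (a, b, c) := iter n rot3 t in t' = (k * a, k * b, k * c).

Definition same_type (A B : hexagon) : Prop := same_ratio (Dtriple A) (Dtriple B).

End Hex.

From HB Require Import structures.
From mathcomp Require Import all_boot all_order all_algebra.
From mathcomp Require Import reals.
From mathcomp Require Import ring lra.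
Set Implicit Arguments. Unset Strict Implicit. Unset Printing Implicit Defensive.
Import Order.TTheory GRing.Theory Num.Theory.
Local Open Scope ring_scope.

(* For a cyclic sextuple a_0, ..., a_5 let C(a) = sum_i [a_i, a_(i+1)] and let
   D(a_0, a_1, a_2, a_3) be the triple product of the edges a_1 - a_0,
   a_2 - a_1, a_3 - a_2, so that Delta'_i = D(u_i, ..., u_(i+3)).
   1. If u is a support system of A, the [u_i, u_(i+1)] are the edges of A,
      hence C(u) = 0, and D(a_0..a_3) - D(a_3, a_4, a_5, a_0) = (a_3 - a_0, C(a))
      gives Delta'_i = Delta'_(i+3).
   2. A generic hexagon with 3-periodic Deltas has the support system
      lam_j [v_j, v_(j+1)] for suitable weights, because
      [[a, b], [b, c]] = (a, [b, c]) b; so generic derivatives are strongly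
      regular (non-coplanarity makes the Deltas nonzero via a determinant).
   3. Two support systems u, w of a generic A satisfy w_j = mu_j u_j with
      mu_j mu_(j+1) = 1 (both are normal to v_j and v_(j+1)), so mu alternates
      between two values s, t; two more identities, valid modulo C(u) = 0, show
      that such an alternate rescaling multiplies all Deltas by one factor. *)

Section Coordinates.
Variable R : realType.
Notation vec := 'rV[R]_3.

Lemma i3E (k : nat) : (k < 3)%N -> val (i3 k) = k.
Proof. by move=> lt_k3; rewrite /i3 /= inordK ?modn_small // ltn_pmod. Qed.

Lemma i3_mod (a b : nat) : (a %% 3 = b %% 3)%N -> i3 a = i3 b.
Proof. by move=> eq_ab; rewrite /i3 eq_ab. Qed.

Lemma dotE (p q : vec) : dot p q =
  p 0 (i3 0) * q 0 (i3 0) + p 0 (i3 1) * q 0 (i3 1) + p 0 (i3 2) * q 0 (i3 2).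
Proof.
rewrite /dot !big_ord_recr big_ord0 /= add0r.
by congr (_ + _ + _); congr (p 0 _ * q 0 _); apply/val_inj; rewrite /= i3E.
Qed.

Lemma crossE0 (p q : vec) :
  cross p q 0 (i3 0) = p 0 (i3 1) * q 0 (i3 2) - p 0 (i3 2) * q 0 (i3 1).
Proof. by rewrite /cross mxE (@i3_mod (i3 0 + 1) 1) ?i3E // (@i3_mod (i3 0 + 2) 2) ?i3E. Qed.

Lemma crossE1 (p q : vec) :
  cross p q 0 (i3 1) = p 0 (i3 2) * q 0 (i3 0) - p 0 (i3 0) * q 0 (i3 2).
Proof. by rewrite /cross mxE (@i3_mod (i3 1 + 1) 2) ?i3E // (@i3_mod (i3 1 + 2) 0) ?i3E. Qed.

Lemma crossE2 (p q : vec) :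
  cross p q 0 (i3 2) = p 0 (i3 0) * q 0 (i3 1) - p 0 (i3 1) * q 0 (i3 0).
Proof. by rewrite /cross mxE (@i3_mod (i3 2 + 1) 0) ?i3E // (@i3_mod (i3 2 + 2) 1) ?i3E. Qed.

Lemma row3P (p q : vec) : p 0 (i3 0) = q 0 (i3 0) -> p 0 (i3 1) = q 0 (i3 1) ->
  p 0 (i3 2) = q 0 (i3 2) -> p = q.
Proof.
move=> eq0 eq1 eq2; apply/rowP => j.
have -> : j = i3 j by apply/val_inj; rewrite i3E.
by case: j => [[|[|[|]]]].
Qed.

Lemma entryD (p q : vec) j : (p + q) 0 j = p 0 j + q 0 j. Proof. by rewrite mxE. Qed.
Lemma entryN (p : vec) j : (- p) 0 j = - p 0 j. Proof. by rewrite mxE. Qed.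
Lemma entryB (p q : vec) j : (p - q) 0 j = p 0 j - q 0 j. Proof. by rewrite !mxE. Qed.
Lemma entryZ (a : R) (p : vec) j : (a *: p) 0 j = a * p 0 j. Proof. by rewrite mxE. Qed.
Lemma entry0 j : (0 : vec) 0 j = 0. Proof. by rewrite mxE. Qed.

Definition triple (a b c : vec) : R := dot a (cross b c).

Definition edge_triple (a0 a1 a2 a3 : vec) : R := triple (a1 - a0) (a2 - a1) (a3 - a2).

(* The sum of the cross products of cyclically consecutive vectors; for a
   support system it is the sum of the edges of the hexagon, i.e. zero. *)
Definition cross_sum (a0 a1 a2 a3 a4 a5 : vec) : vec :=
  cross a0 a1 + cross a1 a2 + cross a2 a3 + cross a3 a4 + cross a4 a5 + cross a5 a0.

End Coordinates.

(* Rewrite dot and cross products of sums, differences and multiples into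
   polynomials in coordinates, so that vector identities reduce to [ring]. *)
Ltac expand_coords :=
  rewrite /edge_triple /triple ?dotE;
  do 6 rewrite ?crossE0 ?crossE1 ?crossE2 ?entryB ?entryD ?entryN ?entryZ ?entry0.

Section VectorAlgebra.
Variable R : realType.
Notation vec := 'rV[R]_3.
Implicit Types (a b c p q x y : vec).

Lemma dot0l p : dot 0 p = 0. Proof. by expand_coords; ring. Qed.
Lemma dot0r p : dot p 0 = 0. Proof. by expand_coords; ring. Qed.
Lemma cross0l p : cross 0 p = 0. Proof. by apply: row3P; expand_coords; ring. Qed.
Lemma cross0r p : cross p 0 = 0. Proof. by apply: row3P; expand_coords; ring. Qed.
Lemma crossZZ (s t : R) p q : cross (s *: p) (t *: q) = (s * t) *: cross p q.
Proof. by apply: row3P; expand_coords; ring. Qed.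

Lemma dot_crossl p q : dot p (cross p q) = 0. Proof. by expand_coords; ring. Qed.
Lemma dot_crossr p q : dot q (cross p q) = 0. Proof. by expand_coords; ring. Qed.

Lemma tripleC a b c : triple a b c = dot (cross a b) c. Proof. by expand_coords; ring. Qed.
Lemma triple0l b c : triple 0 b c = 0. Proof. by expand_coords; ring. Qed.

(* [[a, b], [b, c]] = (a, [b, c]) b: the key to building support systems. *)
Lemma cross_cross a b c : cross (cross a b) (cross b c) = triple a b c *: b.
Proof. by apply: row3P; expand_coords; ring. Qed.

(* Expansion of x along the normal n = [p, q] and the plane it spans. *)
Lemma cross_expand p q x : dot (cross p q) (cross p q) *: x =
  dot x (cross p q) *: cross p q - cross (cross p q) (dot x p *: q - dot x q *: p).
Proof. by apply: row3P; expand_coords; ring. Qed.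

Lemma orth_normal p q x : dot x p = 0 -> dot x q = 0 ->
  dot (cross p q) (cross p q) *: x = dot x (cross p q) *: cross p q.
Proof. by move=> xp xq; rewrite cross_expand xp xq !scale0r subrr cross0r subr0. Qed.

Lemma dotvv_neq0 p : p != 0 -> dot p p != 0.
Proof.
apply: contra_neq => pp0; rewrite dotE in pp0.
have := sqr_ge0 (p 0 (i3 0)); have := sqr_ge0 (p 0 (i3 1)); have := sqr_ge0 (p 0 (i3 2)).
rewrite !expr2 => s2 s1 s0.
by apply: row3P; rewrite entry0; nra.
Qed.

Lemma orth_parallel p q x y : cross p q != 0 ->
  dot x p = 0 -> dot x q = 0 -> dot y p = 0 -> dot y q = 0 -> x != 0 ->
  y = (dot y (cross p q) / dot x (cross p q)) *: x.
Proof.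
move=> n_neq0 xp xq yp yq x_neq0; set n := cross p q.
have nn_neq0 := dotvv_neq0 n_neq0.
have x_eq : dot n n *: x = dot x n *: n := orth_normal xp xq.
have xn_neq0 : dot x n != 0.
  apply: contraNneq x_neq0 => xn0.
  have : dot n n *: x == 0 by rewrite x_eq xn0 scale0r.
  by rewrite scaler_eq0 (negbTE nn_neq0).
apply: (scalerI nn_neq0); rewrite scalerA mulrC -scalerA x_eq scalerA divfK //.
exact: orth_normal.
Qed.

Lemma edge_triple_shift3 (a0 a1 a2 a3 a4 a5 : vec) :
  edge_triple a0 a1 a2 a3 - edge_triple a3 a4 a5 a0 =
  dot (a3 - a0) (cross_sum a0 a1 a2 a3 a4 a5).
Proof. by rewrite /cross_sum; expand_coords; ring. Qed.

End VectorAlgebra.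

Section TripleDeterminant.
Variable R : realType.
Notation vec := 'rV[R]_3.

Lemma det_mx33 (M : 'M[R]_3) :
  let m i j := M (inord i) (inord j) in
  \det M = m 0 0 * (m 1 1 * m 2 2 - m 1 2 * m 2 1)
         - m 0 1 * (m 1 0 * m 2 2 - m 1 2 * m 2 0)
         + m 0 2 * (m 1 0 * m 2 1 - m 1 1 * m 2 0).
Proof.
move=> m; rewrite (expand_det_row _ 0) !big_ord_recr big_ord0 /= /cofactor.
rewrite !(expand_det_row _ 0) !big_ord_recr !big_ord0 /= /cofactor !det_mx11 !mxE /=.
have mE i j : M i j = m i j by rewrite /m !inord_val.
by rewrite !mE /m /=; ring.
Qed.

Lemma i3_inord (k : nat) : (k < 3)%N -> i3 k = inord k.
Proof. by move=> lt_k3; rewrite /i3 modn_small. Qed.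

Lemma stack3_rows (p q r : vec) j :
  [/\ col_mx p (col_mx q r) (inord 0 : 'I_3) j = p 0 j,
      col_mx p (col_mx q r) (inord 1 : 'I_3) j = q 0 j &
      col_mx p (col_mx q r) (inord 2 : 'I_3) j = r 0 j].
Proof.
have -> : (inord 0 : 'I_3) = lshift 2 (0 : 'I_1) by apply/val_inj; rewrite /= inordK.
have -> : (inord 1 : 'I_3) = rshift 1 (lshift 1 (0 : 'I_1)) by apply/val_inj; rewrite /= inordK.
have -> : (inord 2 : 'I_3) = rshift 1 (rshift 1 (0 : 'I_1)) by apply/val_inj; rewrite /= inordK.
by rewrite !col_mxEd !col_mxEu.
Qed.

Lemma triple_det (p q r : vec) : triple p q r = \det (col_mx p (col_mx q r)).
Proof.
rewrite det_mx33 /=; expand_coords; rewrite !i3_inord //.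
have [p0 q0 r0] := stack3_rows p q r (inord 0).
have [p1 q1 r1] := stack3_rows p q r (inord 1).
have [p2 q2 r2] := stack3_rows p q r (inord 2).
by rewrite p0 q0 r0 p1 q1 r1 p2 q2 r2; ring.
Qed.

Lemma triple_neq0 (p q r : vec) : ~~ coplanar p q r -> triple p q r != 0.
Proof.
apply: contra => /eqP triple0; rewrite /coplanar ltn_neqAle rank_leq_row andbT.
have := @row_free_unit _ 3 (col_mx p (col_mx q r)); rewrite /row_free => ->.
by rewrite unitmxE unitfE -triple_det triple0 eqxx.
Qed.

End TripleDeterminant.

Section CyclicIndices.

Lemma sh0 (i : 'I_6) : sh i 0 = i.
Proof. by apply/val_inj; rewrite /sh /= inordK addn0 ?modn_small. Qed.

Lemma shD (i : 'I_6) (a b : nat) : sh (sh i a) b = sh i (a + b).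
Proof.
by apply/val_inj; rewrite /sh /= !inordK ?ltn_pmod // modnDml addnA.
Qed.

Lemma sh_mod (i : 'I_6) (a b : nat) : (a %% 6 = b %% 6)%N -> sh i a = sh i b.
Proof. by move=> eq_ab; rewrite /sh -modnDmr eq_ab modnDmr. Qed.

Lemma sh_inord (k m n : nat) : (k < 6)%N -> ((k + m) %% 6 = n)%N ->
  sh (inord k : 'I_6) m = inord n.
Proof. by move=> lt_k6 km_n; rewrite /sh inordK // km_n. Qed.

End CyclicIndices.

Section HexagonDelta.
Variable R : realType.
Implicit Types (A B : hexagon R) (u w : 'I_6 -> 'rV[R]_3).

Lemma Delta_edge_triple B i :
  Delta B i = edge_triple (B i) (B (sh i 1)) (B (sh i 2)) (B (sh i 3)).
Proof. by rewrite /Delta /edge !shD. Qed.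

Lemma Delta_sh B i k : Delta B (sh i k) =
  edge_triple (B (sh i k)) (B (sh i k.+1)) (B (sh i k.+2)) (B (sh i k.+3)).
Proof. by rewrite Delta_edge_triple !shD !addnS addn0. Qed.

(* The cross products of a support system telescope: their sum, starting at
   any index, is the (vanishing) sum of the edges of A. *)
Lemma support_cross_sum A u i : support_system A u ->
  cross_sum (u i) (u (sh i 1)) (u (sh i 2)) (u (sh i 3)) (u (sh i 4)) (u (sh i 5)) = 0.
Proof.
move=> supp_u.
have cross_step k : cross (u (sh i k)) (u (sh i k.+1)) = A (sh i k.+2) - A (sh i k.+1).
  by have := supp_u (sh i k); rewrite /edge !shD !addn1.
have := cross_step 0%N; rewrite sh0 => cross0.
have := cross_step 5%N; rewrite (@sh_mod i 6 0) // (@sh_mod i 7 1) // sh0 => cross5.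
rewrite /cross_sum cross0 !cross_step cross5 (@sh_mod i 6 0) // sh0.
by apply: row3P; rewrite ?entryD ?entryN ?entry0; ring.
Qed.

Lemma derived_Delta_shift3 A u : support_system A u ->
  forall i, Delta (derived u) i = Delta (derived u) (sh i 3).
Proof.
move=> supp_u i; apply/eqP; rewrite -subr_eq0 /derived !Delta_edge_triple !shD.
rewrite (@sh_mod i (3 + 3) 0) // sh0.
by rewrite edge_triple_shift3 (support_cross_sum i supp_u) dot0r.
Qed.

End HexagonDelta.

Section SupportFromWeights.
Variable R : realType.
Implicit Types (B : hexagon R).

(* The equations lam_j lam_(j+1) d_j = 1 around the 6-cycle are solvable
   when d is nowhere zero and 3-periodic (then d_0 d_2 d_4 = d_1 d_3 d_5). *)
Lemma cyclic_weights (d : 'I_6 -> R) :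
  (forall j, d j != 0) -> (forall j, d j = d (sh j 3)) ->
  exists lam : 'I_6 -> R, forall j, lam j * lam (sh j 1) * d j = 1.
Proof.
move=> d_neq0 d_per.
set d0 := d (inord 0); set d1 := d (inord 1); set d2 := d (inord 2).
have d3 : d (inord 3) = d0 by rewrite /d0 [RHS]d_per (@sh_inord 0 3 3).
have d4 : d (inord 4) = d1 by rewrite /d1 [RHS]d_per (@sh_inord 1 3 4).
have d5 : d (inord 5) = d2 by rewrite /d2 [RHS]d_per (@sh_inord 2 3 5).
exists (fun j => match val j with
  | 0 => 1 | 1 => d0^-1 | 2 => d0 / d1 | 3 => d1 / (d0 * d2) | 4 => d2 / d1
  | _ => d2^-1 end) => j.
have [nz0 nz1 nz2] : [/\ d0 != 0, d1 != 0 & d2 != 0] by split; apply: d_neq0.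
rewrite -(inord_val j); case: j => [[|[|[|[|[|[|//]]]]]] lt_j6] /=.
- by rewrite (@sh_inord 0 1 1) // !inordK // -/d0; field; rewrite ?nz0 ?nz1 ?nz2.
- by rewrite (@sh_inord 1 1 2) // !inordK // -/d1; field; rewrite ?nz0 ?nz1 ?nz2.
- by rewrite (@sh_inord 2 1 3) // !inordK // -/d2; field; rewrite ?nz0 ?nz1 ?nz2.
- by rewrite (@sh_inord 3 1 4) // !inordK // d3; field; rewrite ?nz0 ?nz1 ?nz2.
- by rewrite (@sh_inord 4 1 5) // !inordK // d4; field; rewrite ?nz0 ?nz1 ?nz2.
- by rewrite (@sh_inord 5 1 0) // !inordK // d5; field; rewrite ?nz0 ?nz1 ?nz2.
Qed.

(* Scaling the normals [v_j, v_(j+1)] by weights with lam_j lam_(j+1) Delta_j = 1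
   gives a support system, since [[v_j, v_(j+1)], [v_(j+1), v_(j+2)]] = Delta_j v_(j+1). *)
Lemma support_of_weights B (lam : 'I_6 -> R) :
  (forall j, lam j * lam (sh j 1) * Delta B j = 1) ->
  support_system B (fun j => lam j *: cross (edge B j) (edge B (sh j 1))).
Proof.
move=> lam_eq j /=.
by rewrite crossZZ shD cross_cross scalerA -[triple _ _ _]/(Delta B j) lam_eq scale1r.
Qed.

Lemma periodic_regular B : generic B -> (forall i, Delta B i = Delta B (sh i 3)) -> regular B.
Proof.
move=> gen_B Delta_per; split=> //.
have Delta_neq0 i : Delta B i != 0 := triple_neq0 (gen_B i).2.
have [lam lam_eq] := cyclic_weights Delta_neq0 Delta_per.
by exists (fun j => lam j *: cross (edge B j) (edge B (sh j 1))); apply: support_of_weights.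
Qed.

End SupportFromWeights.

Section TwoSupportSystems.
Variable R : realType.
Notation vec := 'rV[R]_3.
Variable A : hexagon R.
Hypothesis gen_A : generic A.

Lemma edge_neq0 j : edge A j != 0.
Proof.
by apply: contraNneq (triple_neq0 (gen_A j).2) => ->; rewrite triple0l.
Qed.

Lemma edge_normal_neq0 j : cross (edge A j) (edge A (sh j 1)) != 0.
Proof.
by apply: contraNneq (triple_neq0 (gen_A j).2) => normal0; rewrite tripleC normal0 dot0l.
Qed.

(* u_j is orthogonal to both v_j = [u_(j-1), u_j] and v_(j+1) = [u_j, u_(j+1)]. *)
Lemma support_orth (u : 'I_6 -> vec) j : support_system A u ->
  dot (u j) (edge A j) = 0 /\ dot (u j) (edge A (sh j 1)) = 0.
Proof.
move=> supp_u; split; last by rewrite -supp_u dot_crossl.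
have := supp_u (sh j 5); rewrite shD (@sh_mod j (5 + 1) 0) // sh0 => <-.
exact: dot_crossr.
Qed.

Lemma support_neq0 (u : 'I_6 -> vec) j : support_system A u -> u j != 0.
Proof.
by move=> supp_u; apply: contraNneq (edge_neq0 (sh j 1)) => u0; rewrite -supp_u u0 cross0l.
Qed.

(* Two support systems of A differ by scalars mu_j with mu_j mu_(j+1) = 1:
   both u_j and w_j lie on the normal line of the plane spanned by v_j, v_(j+1). *)
Lemma support_rescaling (u w : 'I_6 -> vec) : support_system A u -> support_system A w ->
  exists mu : 'I_6 -> R,
    (forall j, w j = mu j *: u j) /\ (forall j, mu j * mu (sh j 1) = 1).
Proof.
move=> supp_u supp_w.
pose n j := cross (edge A j) (edge A (sh j 1)).
pose mu j := dot (w j) (n j) / dot (u j) (n j).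
have w_eq j : w j = mu j *: u j.
  have [uj0 uj1] := support_orth j supp_u; have [wj0 wj1] := support_orth j supp_w.
  exact: orth_parallel (edge_normal_neq0 j) uj0 uj1 wj0 wj1 (support_neq0 j supp_u).
exists mu; split=> // j.
have := supp_w j; rewrite (w_eq j) (w_eq (sh j 1)) crossZZ supp_u => /eqP.
rewrite -subr_eq0 -{2}(scale1r (edge A (sh j 1))) -scalerBl scaler_eq0.
by rewrite (negbTE (edge_neq0 _)) orbF subr_eq0 => /eqP.
Qed.

End TwoSupportSystems.

Lemma alternating_period2 (R : ringType) (mu : 'I_6 -> R) :
  (forall j, mu j * mu (sh j 1) = 1) -> forall i k, mu (sh i k.+2) = mu (sh i k).
Proof.
move=> mu_inv i k; have := mu_inv (sh i k.+1); have := mu_inv (sh i k).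
rewrite !shD !addn1 => inv0 inv1.
by rewrite -[LHS]mul1r -inv0 -mulrA inv1 mulr1.
Qed.

Lemma same_ratio_proportional (R : realType) (x0 x1 x2 y0 y1 y2 : R) :
  x0 != 0 -> y1 * x0 = y0 * x1 -> y2 * x0 = y0 * x2 -> y0 != 0 ->
  same_ratio (x0, x1, x2) (y0, y1, y2).
Proof.
move=> x0_neq0 prop1 prop2 y0_neq0; exists (y0 / x0), 0%N; split.
  by rewrite mulf_neq0 ?invr_eq0.
split=> //=; congr (_, _, _).
- by rewrite divfK.
- by apply: (mulIf x0_neq0); rewrite mulrAC divfK.
- by apply: (mulIf x0_neq0); rewrite mulrAC divfK.
Qed.

Section AlternateScaling.
Variable R : realType.
Notation vec := 'rV[R]_3.

(* Scaling a cyclic sextuple alternately by s and t changes consecutive edge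
   triples in the same proportion, up to a multiple of the cross sum. *)
Lemma edge_triple_alt_scale1 (a0 a1 a2 a3 a4 a5 : vec) (s t : R) :
  edge_triple (t *: a1) (s *: a2) (t *: a3) (s *: a4) * edge_triple a0 a1 a2 a3
  - edge_triple (s *: a0) (t *: a1) (s *: a2) (t *: a3) * edge_triple a1 a2 a3 a4
  = s * t * (s - t) * dot (triple a1 a2 a3 *: (a4 - a0)) (cross_sum a0 a1 a2 a3 a4 a5).
Proof. by rewrite /cross_sum; expand_coords; ring. Qed.

Lemma edge_triple_alt_scale2 (a0 a1 a2 a3 a4 a5 : vec) (s t : R) :
  edge_triple (s *: a2) (t *: a3) (s *: a4) (t *: a5) * edge_triple a0 a1 a2 a3
  - edge_triple (s *: a0) (t *: a1) (s *: a2) (t *: a3) * edge_triple a2 a3 a4 a5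
  = s * t * (s - t) * dot (triple a0 a2 a3 *: (a5 - a1) + triple a1 a2 a3 *: (a0 - a2))
                          (cross_sum a0 a1 a2 a3 a4 a5).
Proof. by rewrite /cross_sum; expand_coords; ring. Qed.

Lemma closed_alt_scale (a0 a1 a2 a3 a4 a5 : vec) (s t : R) :
  cross_sum a0 a1 a2 a3 a4 a5 = 0 ->
  let D := edge_triple (s *: a0) (t *: a1) (s *: a2) (t *: a3) in
  [/\ edge_triple (t *: a1) (s *: a2) (t *: a3) (s *: a4) * edge_triple a0 a1 a2 a3
        = D * edge_triple a1 a2 a3 a4
     & edge_triple (s *: a2) (t *: a3) (s *: a4) (t *: a5) * edge_triple a0 a1 a2 a3
        = D * edge_triple a2 a3 a4 a5].
Proof.
move=> closed D; split; apply/eqP; rewrite -subr_eq0.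
- by rewrite (edge_triple_alt_scale1 _ _ _ _ _ a5) closed dot0r mulr0.
- by rewrite edge_triple_alt_scale2 closed dot0r mulr0.
Qed.

End AlternateScaling.

Section SameType.
Variable R : realType.
Notation vec := 'rV[R]_3.

Lemma alt_rescaling_same_type (u w : 'I_6 -> vec) (mu : 'I_6 -> R) :
  cross_sum (u ord0) (u (sh ord0 1)) (u (sh ord0 2))
            (u (sh ord0 3)) (u (sh ord0 4)) (u (sh ord0 5)) = 0 ->
  (forall j, w j = mu j *: u j) -> (forall j, mu j * mu (sh j 1) = 1) ->
  Delta u (sh ord0 0) != 0 -> Delta w (sh ord0 0) != 0 ->
  same_type (derived u) (derived w).
Proof.
move=> closed_u w_eq mu_inv Du0 Dw0.
rewrite -[u ord0](congr1 u (sh0 ord0)) in closed_u.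
have mu_per := alternating_period2 mu_inv ord0.
have [mu2 mu3] := (mu_per 0%N, mu_per 1%N).
have [mu4 mu5] := (etrans (mu_per 2%N) mu2, etrans (mu_per 3%N) mu3).
have [ratio1 ratio2] := closed_alt_scale (mu (sh ord0 0)) (mu (sh ord0 1)) closed_u.
apply: same_ratio_proportional Du0 _ _ Dw0; rewrite /derived !Delta_sh !w_eq.
- by rewrite mu2 mu3 mu4 ratio1.
- by rewrite mu2 mu3 mu4 mu5 ratio2.
Qed.

End SameType.

Unset Implicit Arguments.

Theorem theorem5p1 (R : realType) (A : hexagon R) :
  regular A ->
  (forall u : 'I_6 -> 'rV[R]_3, support_system A u ->
     forall i : 'I_6, Delta (derived u) i = Delta (derived u) (sh i 3)) /\
  (forall u : 'I_6 -> 'rV[R]_3, support_system A u ->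
     generic (derived u) -> strongly_regular (derived u)) /\
  (forall u w : 'I_6 -> 'rV[R]_3, support_system A u -> support_system A w ->
     generic (derived u) -> generic (derived w) ->
     same_type (derived u) (derived w)).
Proof.
move=> [gen_A _]; split; first by move=> u; exact: derived_Delta_shift3.
split=> [u supp_u gen_u | u w supp_u supp_w gen_u gen_w].
  split; last exact: derived_Delta_shift3 supp_u.
  exact: periodic_regular gen_u (derived_Delta_shift3 supp_u).
have [mu [w_eq mu_inv]] := support_rescaling gen_A supp_u supp_w.
exact: alt_rescaling_same_type (support_cross_sum _ supp_u) w_eq mu_inv
  (triple_neq0 (gen_u _).2) (triple_neq0 (gen_w _).2).
Qed.
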